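(* Let $X$ be one of the sequence spaces $\ell^p$ ($1\le p\le\infty$), $c$, or $c_0$. Let $a=(a_n)\in\ell^\infty$ with $a_n>0$ for all $n\in\mathbb{N}$, and let $b=(b_n)\in X$. Suppose there exists $k\in X^*$ such that the spectrum of $T_k:=A+bk$ satisfies $\Sigma(T_k)\subseteq H:=\{z\in\mathbb{C}\mid \operatorname{re}(z)\le 0\}$. Then: 1. $(a_n)\in c_0$, and $a_n\neq a_m$ whenever $n\neq m$; 2. $b_n\neq 0$ for all $n\in\mathbb{N}$.
   Context: Sequences are complex valued; $\ell^p$ carries the $\ell^p$-norm, $c$ (convergent sequences) and $c_0$ (null sequences) carry the sup norm. $A:X\to X$ is the diagonal operator $(x_n)\mapsto(a_nx_n)$. For $k\in X^*$, $T_k:X\to X$ is the bounded operator $x\mapsto Ax+(kx)\,b$. $\Sigma(\cdot)$ denotes the spectrum. *)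

From Stdlib Require Import Reals.
From Coquelicot Require Import Coquelicot.
Open Scope R_scope.

Definition cseq := nat -> C.

Inductive SeqSpace : Type :=
  | Lp (p : R)   (* l^p, to be used with 1 <= p < oo *)
  | Linf
  | Cconv
  | C0.

Definition valid_space (X : SeqSpace) : Prop :=
  match X with Lp p => 1 <= p | _ => True end.

Definition rpow (t p : R) : R :=
  if Req_EM_T t 0 then 0 else Rpower t p.

Definition bounded_seq (x : cseq) : Prop :=
  exists M : R, forall n, Cmod (x n) <= M.

Definition inX (X : SeqSpace) (x : cseq) : Prop :=
  match X with
  | Lp p => ex_series (fun n => rpow (Cmod (x n)) p)
  | Linf => bounded_seq x
  | Cconv => exists l : C, filterlim x eventually (locally l)
  | C0 => filterlim x eventually (locally (0 : C))
  end.

Definition supnorm (x : cseq) : R :=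
  real (Lub_Rbar (fun r => exists n, r = Cmod (x n))).

Definition normX (X : SeqSpace) (x : cseq) : R :=
  match X with
  | Lp p => rpow (Series (fun n => rpow (Cmod (x n)) p)) (/ p)
  | _ => supnorm x
  end.

Definition sadd (x y : cseq) : cseq := fun n => Cplus (x n) (y n).
Definition sscal (c : C) (x : cseq) : cseq := fun n => Cmult c (x n).
Definition ssub (x y : cseq) : cseq := fun n => Cminus (x n) (y n).

Definition in_dual (X : SeqSpace) (k : cseq -> C) : Prop :=
  (forall x y, inX X x -> inX X y -> k (sadd x y) = Cplus (k x) (k y)) /\
  (forall c x, inX X x -> k (sscal c x) = Cmult c (k x)) /\
  (exists M : R, forall x, inX X x -> Cmod (k x) <= M * normX X x).

Definition bounded_op (X : SeqSpace) (T : cseq -> cseq) : Prop :=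
  (forall x, inX X x -> inX X (T x)) /\
  (forall x y, inX X x -> inX X y -> T (sadd x y) = sadd (T x) (T y)) /\
  (forall c x, inX X x -> T (sscal c x) = sscal c (T x)) /\
  (exists M : R, forall x, inX X x -> normX X (T x) <= M * normX X x).

Definition in_resolvent (X : SeqSpace) (T : cseq -> cseq) (z : C) : Prop :=
  exists S : cseq -> cseq, bounded_op X S /\
    forall x, inX X x ->
      S (ssub (T x) (sscal z x)) = x /\
      ssub (T (S x)) (sscal z (S x)) = x.

Definition spectrum (X : SeqSpace) (T : cseq -> cseq) (z : C) : Prop :=
  ~ in_resolvent X T z.

Definition diagA (a : nat -> R) : cseq -> cseq :=
  fun x n => Cmult (RtoC (a n)) (x n).

Definition Tk (a : nat -> R) (b : cseq) (k : cseq -> C) : cseq -> cseq :=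
  fun x => sadd (diagA a x) (sscal (k x) b).

(* Write e_n for the n-th unit sequence and fix k with Sigma(T_k) in the closed
   left half-plane, so that T_k - z is invertible for every re z > 0.

   For z = a_n > 0, the solution u of (T_k - a_n) u = e_n satisfies
   (a_m - a_n) u_m + k(u) b_m = delta_nm.  At m = n this forces k(u) b_n = 1,
   so b_n <> 0; if a_m = a_n for some m <> n, the m-th coordinate gives
   k(u) b_m = 0, hence k(u) = 0, contradicting k(u) b_n = 1.

   If a does not tend to 0, it has a cluster point l > 0 (a is bounded and
   positive).  Applying S = (T_k - l)^-1 to (T_k - l) e_n gives
   e_n = y_n + k(e_n) w with w = S b and ||y_n|| <= ||S|| |a_n - l|.  Choosing
   i with a_i near l makes w_i <> 0; then, for j <> i with a_j near l, the i-th
   coordinate makes k(e_j) small while the j-th coordinate needs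
   k(e_j) w_j close to 1, and w is bounded. *)
From Stdlib Require Import Reals Arith Lra Lia Classical FunctionalExtensionality.
From Coquelicot Require Import Coquelicot.
Open Scope R_scope.

Lemma rpow_ge0 t p : 0 <= rpow t p.
Proof.
unfold rpow; destruct (Req_EM_T t 0); [lra | left; apply exp_pos].
Qed.

Lemma rpow0 p : rpow 0 p = 0.
Proof. unfold rpow; destruct (Req_EM_T 0 0); [reflexivity | congruence]. Qed.

Lemma rpow_gt0 t p : 0 < t -> rpow t p = Rpower t p.
Proof. intros; unfold rpow; destruct (Req_EM_T t 0); [lra | reflexivity]. Qed.

Lemma rpowM x y p : 0 <= x -> 0 <= y -> rpow (x * y) p = rpow x p * rpow y p.
Proof.
intros Hx Hy.
destruct (Req_dec x 0) as [->|]; [rewrite Rmult_0_l, !rpow0; ring|].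
destruct (Req_dec y 0) as [->|]; [rewrite Rmult_0_r, !rpow0; ring|].
rewrite !rpow_gt0 by (try apply Rmult_lt_0_compat; lra).
now rewrite Rpower_mult_distr by lra.
Qed.

Lemma rpowK t p : 0 <= t -> 0 < p -> rpow (rpow t p) (/ p) = t.
Proof.
intros Ht Hp; destruct (Req_dec t 0) as [->|]; [now rewrite !rpow0|].
rewrite (rpow_gt0 t), rpow_gt0 by (try apply exp_pos; lra).
rewrite Rpower_mult, Rinv_r by lra; apply Rpower_1; lra.
Qed.

Lemma rpow_le x y p : 0 <= x <= y -> 0 <= p -> rpow x p <= rpow y p.
Proof.
intros Hxy Hp; destruct (Req_dec x 0) as [->|]; [rewrite rpow0; apply rpow_ge0|].
rewrite !rpow_gt0 by lra; apply Rle_Rpower_l; lra.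
Qed.

Lemma is_series_single_R (n : nat) (r : R) :
  is_series (fun m => if Nat.eq_dec m n then r else 0) r.
Proof.
set (f := fun m => if Nat.eq_dec m n then r else 0).
assert (Hsum : forall N, sum_n f N = if le_lt_dec n N then r else 0).
{ induction N as [|N IH].
  - rewrite sum_O; unfold f.
    destruct (Nat.eq_dec 0 n), (le_lt_dec n 0); try lia; reflexivity.
  - rewrite sum_Sn, IH; unfold f.
    destruct (le_lt_dec n N), (Nat.eq_dec (S N) n), (le_lt_dec n (S N)); try lia;
      cbn; ring. }
unfold is_series; eapply filterlim_ext_loc; [|apply filterlim_const].
exists n; intros N HN; rewrite Hsum; destruct (le_lt_dec n N); [reflexivity | lia].
Qed.

Definition single (n : nat) (z : C) : cseq :=
  fun m => if Nat.eq_dec m n then z else RtoC 0.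

Lemma single_null n z : filterlim (single n z) eventually (locally (RtoC 0)).
Proof.
eapply filterlim_ext_loc; [|apply filterlim_const].
exists (S n); intros m Hm; unfold single; destruct (Nat.eq_dec m n); [lia | reflexivity].
Qed.

Lemma rpow_single p n z :
  (fun m => rpow (Cmod (single n z m)) p) =
  (fun m => if Nat.eq_dec m n then rpow (Cmod z) p else 0).
Proof.
apply functional_extensionality; intro m; unfold single.
destruct (Nat.eq_dec m n); [reflexivity | now rewrite Cmod_0, rpow0].
Qed.

Lemma supnorm_single n z : supnorm (single n z) = Cmod z.
Proof.
unfold supnorm; rewrite (is_lub_Rbar_unique _ (Cmod z)); [reflexivity|]; split.
- intros r [m ->]; cbn; unfold single.
  destruct (Nat.eq_dec m n); [lra | rewrite Cmod_0; apply Cmod_ge_0].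
- intros u Hu; apply Hu; exists n; unfold single.
  destruct (Nat.eq_dec n n); [reflexivity | congruence].
Qed.

Lemma inX_single X n z : inX X (single n z).
Proof.
destruct X; cbn.
- rewrite rpow_single; eexists; apply is_series_single_R.
- exists (Cmod z); intro m; unfold single; destruct (Nat.eq_dec m n); [lra|].
  rewrite Cmod_0; apply Cmod_ge_0.
- exists (RtoC 0); apply single_null.
- apply single_null.
Qed.

Lemma normX_single X n z : valid_space X -> normX X (single n z) = Cmod z.
Proof.
destruct X; cbn; intros Hp; try apply supnorm_single.
rewrite rpow_single, (is_series_unique _ _ (is_series_single_R n _)).
apply rpowK; [apply Cmod_ge_0 | lra].
Qed.

Lemma filterlim_Cscal (x : cseq) l c :
  filterlim x eventually (locally l) ->
  filterlim (sscal c x) eventually (locally (Cmult c l)).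
Proof.
intros Hx; apply (filterlim_comp _ _ _ x (Cmult c) _ (locally l)); [exact Hx|].
exact (@filterlim_scal_r C_AbsRing C_NormedModule c l).
Qed.

Lemma inX_scal X c x : inX X x -> inX X (sscal c x).
Proof.
destruct X; cbn; unfold sscal.
- intros Hx; eapply ex_series_ext;
    [|apply (@ex_series_scal_l R_AbsRing R_NormedModule (rpow (Cmod c) p)), Hx].
  intro m; cbn; now rewrite Cmod_mult, rpowM by apply Cmod_ge_0.
- intros [M HM]; exists (Cmod c * M); intro m; rewrite Cmod_mult.
  apply Rmult_le_compat_l; [apply Cmod_ge_0 | apply HM].
- intros [l Hl]; exists (Cmult c l); now apply filterlim_Cscal.
- intros Hx; rewrite <- (Cmult_0_r c); now apply filterlim_Cscal.
Qed.

Lemma convergent_bounded (x : cseq) l :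
  filterlim x eventually (locally l) -> bounded_seq x.
Proof.
intros Hx.
destruct (@filterlim_bounded C_AbsRing C_NormedModule x) as [M HM];
  [now exists l|].
now exists M.
Qed.

Lemma Cmod_le_supnorm x m : bounded_seq x -> Cmod (x m) <= supnorm x.
Proof.
intros [M HM]; unfold supnorm.
set (E := fun r => exists n, r = Cmod (x n)).
destruct (Lub_Rbar_correct E) as [Hub Hlub].
assert (Hm : Rbar_le (Cmod (x m)) (Lub_Rbar E)) by (apply Hub; now exists m).
assert (HleM : Rbar_le (Lub_Rbar E) M) by (apply Hlub; intros r [n ->]; apply HM).
destruct (Lub_Rbar E); cbn in *; tauto.
Qed.

Lemma Cmod_le_normX X x m : valid_space X -> inX X x -> Cmod (x m) <= normX X x.
Proof.
destruct X; cbn; intros Hp Hx.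
- set (f := fun n => rpow (Cmod (x n)) p).
  assert (Hfm : Series (fun j => if Nat.eq_dec j m then f m else 0) <= Series f).
  { apply Series_le; [|exact Hx]; intro j; unfold f.
    destruct (Nat.eq_dec j m) as [->|]; split; try lra; apply rpow_ge0. }
  rewrite (is_series_unique _ _ (is_series_single_R m _)) in Hfm.
  rewrite <- (rpowK (Cmod (x m)) p) by (try apply Cmod_ge_0; lra).
  apply rpow_le; [split; [apply rpow_ge0 | exact Hfm]|].
  left; apply Rinv_0_lt_compat; lra.
- now apply Cmod_le_supnorm.
- destruct Hx as [l Hl]; now apply Cmod_le_supnorm, convergent_bounded with l.
- now apply Cmod_le_supnorm, convergent_bounded with (RtoC 0).
Qed.

Lemma resolvent_of_right_half_plane X T (z : C) :
  (forall w : C, spectrum X T w -> Re w <= 0) -> 0 < Re z -> in_resolvent X T z.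
Proof.
intros Hs Hz; apply NNPP; intros Hnot; specialize (Hs z Hnot); lra.
Qed.

Lemma Tk_sub_single a b k z n :
  ssub (Tk a b k (single n (RtoC 1))) (sscal z (single n (RtoC 1))) =
  sadd (single n (Cminus (RtoC (a n)) z)) (sscal (k (single n (RtoC 1))) b).
Proof.
apply functional_extensionality; intro m.
unfold ssub, Tk, sadd, diagA, sscal, single.
destruct (Nat.eq_dec m n) as [->|]; ring.
Qed.

Lemma resolvent_solves_single X a b k z n :
  in_resolvent X (Tk a b k) z ->
  exists u : cseq, forall m,
    Cplus (Cmult (Cminus (RtoC (a m)) z) (u m)) (Cmult (k u) (b m)) =
    single n (RtoC 1) m.
Proof.
intros [S [_ HS]]; destruct (HS _ (inX_single X n (RtoC 1))) as [_ Hright].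
set (u := S (single n (RtoC 1))) in Hright; exists u; intro m.
rewrite <- Hright; unfold ssub, Tk, sadd, diagA, sscal; ring.
Qed.

Lemma C1_neq_C0 : RtoC 1 <> RtoC 0.
Proof. intros H; apply (f_equal fst) in H; cbn in H; lra. Qed.

Section PositiveDiagonal.

Variables (X : SeqSpace) (a : nat -> R) (b : cseq) (k : cseq -> C).
Hypothesis a_gt0 : forall n, 0 < a n.
Hypothesis spectrum_left : forall z : C, spectrum X (Tk a b k) z -> Re z <= 0.

Lemma solve_at_diagonal n :
  exists u : cseq,
    Cmult (k u) (b n) = RtoC 1 /\
    forall m, m <> n -> Cplus (Cmult (RtoC (a m - a n)) (u m)) (Cmult (k u) (b m)) = RtoC 0.
Proof.
assert (Hres : in_resolvent X (Tk a b k) (RtoC (a n)))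
  by (apply resolvent_of_right_half_plane; [exact spectrum_left | apply a_gt0]).
destruct (resolvent_solves_single X a b k _ n Hres) as [u Hu]; exists u; split.
- specialize (Hu n); unfold single in Hu; destruct (Nat.eq_dec n n); [|congruence].
  rewrite <- Hu; ring.
- intros m Hmn; specialize (Hu m); unfold single in Hu.
  destruct (Nat.eq_dec m n); [congruence|]; rewrite <- Hu, RtoC_minus; ring.
Qed.

Lemma perturbation_coords_nonzero n : b n <> RtoC 0.
Proof.
intros Hb; destruct (solve_at_diagonal n) as [u [Hn _]].
apply C1_neq_C0; rewrite <- Hn, Hb; ring.
Qed.

Lemma diagonal_injective n m : n <> m -> a n <> a m.
Proof.
intros Hnm Ha; destruct (solve_at_diagonal n) as [u [Hn Hoff]].
specialize (Hoff m (not_eq_sym Hnm)); rewrite Ha, Rminus_diag in Hoff.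
assert (Hkub : Cmult (k u) (b m) = RtoC 0) by (rewrite <- Hoff; ring).
assert (Hku : k u = RtoC 0).
{ replace (k u) with (Cmult (Cmult (k u) (b m)) (Cinv (b m)))
    by (field; apply perturbation_coords_nonzero).
  rewrite Hkub; ring. }
apply C1_neq_C0; rewrite <- Hn, Hku; ring.
Qed.

End PositiveDiagonal.

Lemma bounded_pos_cluster_point (a : nat -> R) :
  (exists M, forall n, Rabs (a n) <= M) -> (forall n, 0 < a n) -> ~ is_lim_seq a 0 ->
  exists l, 0 < l /\
    forall eps, 0 < eps -> forall N, exists n, (N <= n)%nat /\ Rabs (a n - l) < eps.
Proof.
intros [M HM] Ha Hnot0.
pose proof (proj2_sig (ex_LimSup_seq a)) as HL; fold (LimSup_seq a) in HL.
destruct (LimSup_seq a) as [l| |]; cbn in HL.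
- exists l; split.
  + apply Rnot_le_lt; intros Hl; apply Hnot0, is_lim_seq_spec; intros eps.
    destruct (HL eps) as [_ [N HN]]; exists N; intros n Hn.
    specialize (HN n Hn); specialize (Ha n).
    rewrite Rminus_0_r, Rabs_pos_eq by lra; lra.
  + intros eps Heps N; destruct (HL (mkposreal eps Heps)) as [Hfreq [N2 HN2]]; cbn in *.
    destruct (Hfreq (max N N2)) as [n [Hn Hgt]]; exists n; split; [lia|].
    specialize (HN2 n ltac:(lia)); apply Rabs_def1; lra.
- destruct (HL M 0%nat) as [n [_ Hn]]; specialize (HM n).
  pose proof (Rle_abs (a n)); lra.
- destruct (HL 0) as [N HN]; specialize (HN N (le_n N)); specialize (Ha N); lra.
Qed.

Section UnitDecomposition.

Variables (y : nat -> cseq) (c : nat -> C) (w : cseq) (B : nat -> R).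
Hypothesis single_decomposition :
  forall n m, single n (RtoC 1) m = Cplus (y n m) (Cmult (c n) (w m)).
Hypothesis remainder_bound : forall n m, Cmod (y n m) <= B n.

Lemma decomposition_diagonal n : 1 <= B n + Cmod (c n) * Cmod (w n).
Proof.
pose proof (single_decomposition n n) as Hnn; unfold single in Hnn.
destruct (Nat.eq_dec n n); [|congruence].
rewrite <- Cmod_mult, <- Cmod_1, Hnn.
eapply Rle_trans; [apply Cmod_triangle|]; specialize (remainder_bound n n); lra.
Qed.

Lemma decomposition_off_diagonal n m : n <> m -> Cmod (c n) * Cmod (w m) <= B n.
Proof.
intros Hnm; pose proof (single_decomposition n m) as Hnm0; unfold single in Hnm0.
destruct (Nat.eq_dec m n); [congruence|].
rewrite <- Cmod_mult.
replace (Cmult (c n) (w m)) with (Cminus (Cplus (y n m) (Cmult (c n) (w m))) (y n m))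
  by ring.
rewrite <- Hnm0; replace (Cminus (RtoC 0) (y n m)) with (Copp (y n m)) by ring.
rewrite Cmod_opp; apply remainder_bound.
Qed.

Lemma decomposition_remainder_not_small (W : R) :
  (forall m, Cmod (w m) <= W) ->
  ~ (forall eps, 0 < eps -> forall N, exists n, (N <= n)%nat /\ B n < eps).
Proof.
intros Hw Hsmall.
assert (HW : 0 <= W) by (eapply Rle_trans; [apply Cmod_ge_0 | apply (Hw 0%nat)]).
destruct (Hsmall (1 / 2) ltac:(lra) 0%nat) as [i [_ HBi]].
assert (Hwi : 0 < Cmod (w i)).
{ pose proof (decomposition_diagonal i) as Hdiag.
  destruct (Cmod_ge_0 (w i)) as [|Hz]; [assumption|].
  rewrite <- Hz in Hdiag; lra. }
set (C' := 1 + W / Cmod (w i)).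
assert (HC' : 0 < C') by (unfold C'; pose proof (Rdiv_le_0_compat W _ HW Hwi); lra).
(* the i-th coordinate bounds c_j, and then the j-th one bounds 1 *)
assert (Hfar : forall j, i <> j -> 1 <= B j * C').
{ intros j Hij.
  assert (Hcj : Cmod (c j) <= B j / Cmod (w i)).
  { apply Rmult_le_reg_r with (Cmod (w i)); [exact Hwi|].
    unfold Rdiv; rewrite Rmult_assoc, Rinv_l, Rmult_1_r by lra.
    apply decomposition_off_diagonal; congruence. }
  assert (Cmod (c j) * Cmod (w j) <= B j / Cmod (w i) * W)
    by (apply Rmult_le_compat; try apply Cmod_ge_0; [exact Hcj | apply Hw]).
  pose proof (decomposition_diagonal j).
  replace (B j * C') with (B j + B j / Cmod (w i) * W) by (unfold C'; field; lra).
  lra. }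
destruct (Hsmall (/ C') ltac:(apply Rinv_0_lt_compat; lra) (S i)) as [j [Hj HBj]].
specialize (Hfar j ltac:(lia)).
apply (Rmult_lt_compat_r C') in HBj; [|lra]; rewrite Rinv_l in HBj; lra.
Qed.

End UnitDecomposition.

Lemma diagonal_tends_to_0 X a b k :
  valid_space X -> (exists M, forall n, Rabs (a n) <= M) -> (forall n, 0 < a n) ->
  inX X b -> (forall z : C, spectrum X (Tk a b k) z -> Re z <= 0) ->
  is_lim_seq a 0.
Proof.
intros HX Hbnd Ha Hb Hs; apply NNPP; intros Hnot0.
destruct (bounded_pos_cluster_point a Hbnd Ha Hnot0) as [l [Hl Hclust]].
assert (Hres : in_resolvent X (Tk a b k) (RtoC l))
  by (apply resolvent_of_right_half_plane; [exact Hs | cbn; exact Hl]).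
destruct Hres as [S [[HSX [HSadd [HSscal [MS HMS]]]] HSinv]].
refine (decomposition_remainder_not_small (fun n => S (single n (RtoC (a n - l))))
          (fun n => k (single n (RtoC 1))) (S b) (fun n => MS * Rabs (a n - l))
          _ _ (normX X (S b)) _ _).
- intros n m.
  destruct (HSinv _ (inX_single X n (RtoC 1))) as [Hleft _].
  rewrite Tk_sub_single, HSadd, HSscal in Hleft
    by (apply inX_single || (apply inX_scal, Hb) || exact Hb).
  rewrite RtoC_minus; exact (eq_sym (f_equal (fun x => x m) Hleft)).
- intros n m; eapply Rle_trans; [apply Cmod_le_normX; [exact HX | apply HSX, inX_single]|].
  eapply Rle_trans; [apply HMS, inX_single|].
  rewrite normX_single, Cmod_R by exact HX; lra.
- intro m; apply Cmod_le_normX; [exact HX | apply HSX, Hb].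
- intros eps Heps N.
  assert (HK : 0 < Rabs MS + 1) by (pose proof (Rabs_pos MS); lra).
  destruct (Hclust (eps / (Rabs MS + 1)) ltac:(apply Rdiv_lt_0_compat; lra) N)
    as [n [Hn Hclose]].
  exists n; split; [exact Hn|].
  apply (Rmult_lt_compat_l (Rabs MS + 1)) in Hclose; [|lra].
  replace ((Rabs MS + 1) * (eps / (Rabs MS + 1))) with eps in Hclose by (field; lra).
  pose proof (Rle_abs MS); pose proof (Rabs_pos (a n - l)); nra.
Qed.

Theorem theorem1 (X : SeqSpace) (a : nat -> R) (b : nat -> C) :
  valid_space X ->
  (exists M : R, forall n, Rabs (a n) <= M) ->
  (forall n, 0 < a n) ->
  inX X b ->
  (exists k : cseq -> C, in_dual X k /\
     (forall z : C, spectrum X (Tk a b k) z -> Re z <= 0)) ->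
  (is_lim_seq a 0 /\ (forall n m : nat, n <> m -> a n <> a m)) /\
  (forall n : nat, b n <> RtoC 0).
Proof.
intros HX Hbnd Ha Hb [k [_ Hs]]; split; [split|].
- exact (diagonal_tends_to_0 X a b k HX Hbnd Ha Hb Hs).
- exact (diagonal_injective X a b k Ha Hs).
- exact (perturbation_coords_nonzero X a b k Ha Hs).
Qed.
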